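(* Let $N\ge 1$, $l>0$, $\Delta\tau>0$, $L>(N+1)l$ and $v_{0,\min}\le v_{0,\max}$. Consider the platoon system, with state $y=(\tilde x_1,\tilde v_1,\dots,\tilde x_N,\tilde v_N,v_0)\in\mathbb{R}^{2N+1}$, input $u=(u_0,\dots,u_N)\in\mathbb{U}$ and disturbance $w\in\mathbb{W}$: $$\tilde x_i^+=\tilde x_i+\tilde v_i\Delta\tau+(u_0-u_i)\tfrac{\Delta\tau^2}{2}+w_{0,x}-w_{i,x},\quad \tilde v_i^+=\tilde v_i+(u_0-u_i)\Delta\tau+w_{0,v}-w_{i,v}\ (i=1,\dots,N),\quad v_0^+=v_0+u_0\Delta\tau+w_{0,v}.$$ Let $\mathbb{S}$, $\mathbb{S}_0,\dots,\mathbb{S}_N$, $\mathcal{S}$, the hyper-rectangles $\underline{\mathcal{R}}_{\mathbb{U}}=\prod_{i=0}^N I_i$ and $\overline{\mathcal{R}}_{\mathbb{W}}=\prod_{i=0}^N J_{i,x}\times J_{i,v}$, and the sets $\Omega_0,\dots,\Omega_N$ be as described in the context. Then $\mathcal{S}\subseteq\mathbb{S}$, and the set $$\Omega:=\{y\in\mathbb{R}^{2N+1} : (\tilde x_i,\tilde v_i)\in\Omega_i \text{ for } i=1,\dots,N,\ v_0\in\Omega_0\}$$ is a robust control invariant set for the platoon system (with inputs in $\mathbb{U}$ and disturbances in $\mathbb{W}$) that is contained in $\mathcal{S}$.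
   Context: A platoon consists of $N+1$ vehicles indexed $0$ (the leader) to $N$, all of length $l$. Vehicle $i$ has absolute position $x_i$, velocity $v_i$, control input $u_i$ and additive disturbances $w_{i,x},w_{i,v}$, with dynamics $x_i^+=x_i+v_i\Delta\tau+u_i\frac{\Delta\tau^2}{2}+w_{i,x}$, $v_i^+=v_i+u_i\Delta\tau+w_{i,v}$. Admissible inputs: $\mathbb{U}=\prod_{i=0}^N[u_{i,\min},u_{i,\max}]$; admissible disturbances: $w=(w_{i,s})_{i=0,\dots,N;\,s=x,v}\in\mathbb{W}=\prod_{i=0}^N[w_{i,x,\min},w_{i,x,\max}]\times[w_{i,v,\min},w_{i,v,\max}]$. Relative coordinates are $\tilde x_i=x_0-x_i$, $\tilde v_i=v_0-v_i$ ($i=1,\dots,N$), giving the platoon system in the claim. Safe set: $\mathbb{S}=\{y : \tilde x_i\ge \tilde x_{i-1}+l \ (i=1,\dots,N)\text{ with }\tilde x_0:=0,\ \tilde x_N\le L,\ v_0\in[v_{0,\min},v_{0,\max}]\}$. Envelope sets: for $i=1,\dots,N$, $\mathbb{S}_i=\{(\tilde x_i,\tilde v_i)\in\mathbb{R}^2 : il+(i-1)\frac{L-Nl}{N}\le\tilde x_i\le il+i\frac{L-Nl}{N}\}$, and $\mathbb{S}_0=[v_{0,\min},v_{0,\max}]$; $\mathcal{S}=\{y : (\tilde x_i,\tilde v_i)\in\mathbb{S}_i\ (i=1,\dots,N),\ v_0\in\mathbb{S}_0\}$. Relative inputs and disturbances: $\tilde u_0=u_0$, $\tilde u_i=u_0-u_i$,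 $\tilde w_{0,s}=w_{0,s}$, $\tilde w_{i,s}=w_{0,s}-w_{i,s}$ ($i=1,\dots,N$, $s=x,v$). Let $\mathcal{U}=\{\tilde u : u\in\mathbb{U}\}\subseteq\mathbb{R}^{N+1}$ and $\mathcal{W}=\{\tilde w : w\in\mathbb{W}\}\subseteq\mathbb{R}^{2(N+1)}$. $\underline{\mathcal{R}}_{\mathbb{U}}=\prod_{i=0}^N I_i$ is any hyper-rectangle (product of closed intervals) with $\underline{\mathcal{R}}_{\mathbb{U}}\subseteq\mathcal{U}$, and $\overline{\mathcal{R}}_{\mathbb{W}}=\prod_{i=0}^N J_{i,x}\times J_{i,v}$ is any hyper-rectangle with $\mathcal{W}\subseteq\overline{\mathcal{R}}_{\mathbb{W}}$. For $i=1,\dots,N$, $\Omega_i\subseteq\mathbb{S}_i$ is a set such that for every $(\tilde x,\tilde v)\in\Omega_i$ there exists $\tilde u\in I_i$ with $(\tilde x+\tilde v\Delta\tau+\tilde u\frac{\Delta\tau^2}{2}+\omega_x,\ \tilde v+\tilde u\Delta\tau+\omega_v)\in\Omega_i$ for all $\omega_x\in J_{i,x}$, $\omega_v\in J_{i,v}$. $\Omega_0\subseteq\mathbb{S}_0$ is a set such that for every $v\in\Omega_0$ there exists $\tilde u\in I_0$ with $v+\tilde u\Delta\tau+\omega\in\Omega_0$ for all $\omega\in[w_{0,v,\min},w_{0,v,\max}]$. A set $\Omega\subseteq\mathbb{R}^{2N+1}$ is robust control invariant (RCI) for the platoon system if for every $y\in\Omega$ there exists $u\in\mathbb{U}$ such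 that the successor state lies in $\Omega$ for every $w\in\mathbb{W}$. *)

From Stdlib Require Import Reals Lra.
Open Scope R_scope.

(* State y = (xt_1, vt_1, ..., xt_N, vt_N, v0) of the platoon system,
   represented by two index-functions (only indices 1..N are meaningful)
   and the leader velocity. *)
Record pstate := mkPState { xt : nat -> R; vt : nat -> R; v0 : R }.

(* Platoon dynamics; u i = u_i (i = 0..N), wx i = w_{i,x}, wv i = w_{i,v}. *)
Definition platoon_succ (dt : R) (u wx wv : nat -> R) (y : pstate) : pstate :=
  mkPState
    (fun i => xt y i + vt y i * dt + (u 0%nat - u i) * (dt ^ 2 / 2) + (wx 0%nat - wx i))
    (fun i => vt y i + (u 0%nat - u i) * dt + (wv 0%nat - wv i))
    (v0 y + u 0%nat * dt + wv 0%nat).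

Definition inU (N : nat) (umin umax : nat -> R) (u : nat -> R) : Prop :=
  forall i, (i <= N)%nat -> umin i <= u i <= umax i.

Definition inW (N : nat) (wxmin wxmax wvmin wvmax : nat -> R) (wx wv : nat -> R) : Prop :=
  forall i, (i <= N)%nat -> wxmin i <= wx i <= wxmax i /\ wvmin i <= wv i <= wvmax i.

Definition RCI (N : nat) (dt : R) (umin umax wxmin wxmax wvmin wvmax : nat -> R)
  (Om : pstate -> Prop) : Prop :=
  forall y, Om y ->
    exists u, inU N umin umax u /\
      forall wx wv, inW N wxmin wxmax wvmin wvmax wx wv ->
        Om (platoon_succ dt u wx wv y).

Definition xt_ext (y : pstate) (i : nat) : R :=
  match i with O => 0 | _ => xt y i end.

Definition safe_set (N : nat) (l L v0min v0max : R) (y : pstate) : Prop :=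
  (forall i, (1 <= i <= N)%nat -> xt_ext y i >= xt_ext y (i - 1) + l) /\
  xt y N <= L /\ v0min <= v0 y <= v0max.

Definition env_i (N : nat) (l L : R) (i : nat) (x v : R) : Prop :=
  INR i * l + (INR i - 1) * ((L - INR N * l) / INR N) <= x <=
  INR i * l + INR i * ((L - INR N * l) / INR N).

Definition env_0 (v0min v0max : R) (v : R) : Prop := v0min <= v <= v0max.

Definition env_set (N : nat) (l L v0min v0max : R) (y : pstate) : Prop :=
  (forall i, (1 <= i <= N)%nat -> env_i N l L i (xt y i) (vt y i)) /\
  env_0 v0min v0max (v0 y).

Definition Omega_set (N : nat) (Om : nat -> R -> R -> Prop) (Om0 : R -> Prop)
  (y : pstate) : Prop :=
  (forall i, (1 <= i <= N)%nat -> Om i (xt y i) (vt y i)) /\ Om0 (v0 y).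

From Pilot Require Import Defs.
From Stdlib Require Import Reals Lra Lia Classical IndefiniteDescription.
Open Scope R_scope.

(* The envelope S_i is the slab [i l + (i-1) d, i l + i d] with d = (L - N l)/N: the top
   of S_(i-1) lies exactly l below the bottom of S_i, S_1 starts at l and S_N ends at L,
   which gives the spacing constraints of the safe set.  In relative coordinates the
   dynamics decouple: (xt_i, vt_i) is driven only by u_0 - u_i and w_0 - w_i, and v_0 only
   by u_0 and w_(0,v).  As the relative inputs range over a rectangle of realisable
   inputs, the invariance inputs of the separate Omega_i can be chosen independently and
   assembled into one admissible input. *)

Lemma choice_on {A : Type} (a : A) (D : nat -> Prop) (P : nat -> A -> Prop) :
  (forall i, D i -> exists x, P i x) -> exists f : nat -> A, forall i, D i -> P i (f i).
Proof.
  intros H.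
  destruct (functional_choice (fun i x => D i -> P i x)) as [f Hf].
  - intros i. destruct (classic (D i)) as [Di | nDi].
    + destruct (H i Di) as [x Hx]. exists x; auto.
    + exists a; tauto.
  - exists f; exact Hf.
Qed.

Lemma env_i_1_ge (N : nat) (l L x v : R) : env_i N l L 1 x v -> x >= l.
Proof. unfold env_i; simpl; lra. Qed.

Lemma env_i_S_ge (N : nat) (l L : R) (i : nat) (x v x' v' : R) :
  env_i N l L i x v -> env_i N l L (S i) x' v' -> x' >= x + l.
Proof. unfold env_i; rewrite S_INR; lra. Qed.

Lemma env_i_N_le (N : nat) (l L x v : R) : (1 <= N)%nat -> env_i N l L N x v -> x <= L.
Proof.
  intros HN [_ Hx].
  assert (HN0 : INR N <> 0) by (apply not_0_INR; lia).
  replace L with (INR N * l + INR N * ((L - INR N * l) / INR N)) by (field; exact HN0).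
  exact Hx.
Qed.

Lemma env_set_safe (N : nat) (l L v0min v0max : R) (y : pstate) :
  (1 <= N)%nat -> env_set N l L v0min v0max y -> safe_set N l L v0min v0max y.
Proof.
  intros HN [Henv Hv0]. split; [| split; [| exact Hv0]].
  - intros [| [| j]] Hi; [lia | |].
    + simpl; rewrite Rplus_0_l. exact (env_i_1_ge _ _ _ _ _ (Henv 1%nat Hi)).
    + replace (S (S j) - 1)%nat with (S j) by lia.
      exact (env_i_S_ge _ _ _ _ _ _ _ _ (Henv (S j) ltac:(lia)) (Henv (S (S j)) Hi)).
  - exact (env_i_N_le _ _ _ _ _ HN (Henv N ltac:(lia))).
Qed.

Lemma Omega_set_mono (N : nat) (Om : nat -> R -> R -> Prop) (Om0 : R -> Prop)
  (Om' : nat -> R -> R -> Prop) (Om0' : R -> Prop) :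
  (forall i, (1 <= i <= N)%nat -> forall x v, Om i x v -> Om' i x v) ->
  (forall v, Om0 v -> Om0' v) ->
  forall y, Omega_set N Om Om0 y -> Omega_set N Om' Om0' y.
Proof.
  intros HOm HOm0 y [Hy Hy0]. split.
  - intros i Hi. exact (HOm i Hi _ _ (Hy i Hi)).
  - exact (HOm0 _ Hy0).
Qed.

Section OmegaRCI.

Variables (N : nat) (dt : R).
Variables (umin umax wxmin wxmax wvmin wvmax Ia Ib Jxa Jxb Jva Jvb : nat -> R).
Variables (Om : nat -> R -> R -> Prop) (Om0 : R -> Prop).

Hypothesis HRU : forall ut : nat -> R,
  (forall i, (i <= N)%nat -> Ia i <= ut i <= Ib i) ->
  exists u, inU N umin umax u /\ ut 0%nat = u 0%nat /\
    (forall i, (1 <= i <= N)%nat -> ut i = u 0%nat - u i).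

Hypothesis HRW : forall wx wv, inW N wxmin wxmax wvmin wvmax wx wv ->
  forall i, (1 <= i <= N)%nat ->
    Jxa i <= wx 0%nat - wx i <= Jxb i /\ Jva i <= wv 0%nat - wv i <= Jvb i.

Hypothesis HOmI : forall i, (1 <= i <= N)%nat -> forall x v, Om i x v ->
  exists uu, Ia i <= uu <= Ib i /\
    forall ox ov, Jxa i <= ox <= Jxb i -> Jva i <= ov <= Jvb i ->
      Om i (x + v * dt + uu * (dt ^ 2 / 2) + ox) (v + uu * dt + ov).

Hypothesis HOm0I : forall v, Om0 v ->
  exists uu, Ia 0%nat <= uu <= Ib 0%nat /\
    forall o, wvmin 0%nat <= o <= wvmax 0%nat -> Om0 (v + uu * dt + o).

Lemma Omega_set_RCI : RCI N dt umin umax wxmin wxmax wvmin wvmax (Omega_set N Om Om0).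
Proof.
  intros y [Hy Hy0].
  destruct (HOm0I _ Hy0) as [u0 [Hu0 Hu0inv]].
  (* Plain [xt] would denote [Rgeom.xt] from Reals. *)
  destruct (choice_on 0 (fun i => (1 <= i <= N)%nat)
    (fun i uu => Ia i <= uu <= Ib i /\
       forall ox ov, Jxa i <= ox <= Jxb i -> Jva i <= ov <= Jvb i ->
         Om i (Defs.xt y i + vt y i * dt + uu * (dt ^ 2 / 2) + ox) (vt y i + uu * dt + ov)))
    as [f Hf].
  { intros i Hi. exact (HOmI i Hi _ _ (Hy i Hi)). }
  destruct (HRU (fun i => match i with O => u0 | _ => f i end)) as [u [HuU [Hu0e Hue]]].
  { intros [| i] Hi; [exact Hu0 | exact (proj1 (Hf (S i) ltac:(lia)))]. }
  exists u. split; [exact HuU |].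
  intros wx wv HW. split; simpl.
  - intros i Hi. rewrite <- (Hue i Hi).
    destruct i as [| i]; [lia |].
    destruct (HRW wx wv HW (S i) Hi) as [Hox Hov].
    exact (proj2 (Hf (S i) Hi) _ _ Hox Hov).
  - rewrite <- Hu0e. exact (Hu0inv _ (proj2 (HW 0%nat (Nat.le_0_l N)))).
Qed.

End OmegaRCI.

Theorem proposition2
  (N : nat) (l dt L v0min v0max : R)
  (umin umax wxmin wxmax wvmin wvmax : nat -> R)
  (* hyper-rectangle R_U = prod_{i=0}^N [Ia i, Ib i] *)
  (Ia Ib : nat -> R)
  (* hyper-rectangle R_W = prod_{i=0}^N [Jxa i, Jxb i] x [Jva i, Jvb i] *)
  (Jxa Jxb Jva Jvb : nat -> R)
  (Om : nat -> R -> R -> Prop) (Om0 : R -> Prop)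
  (HN : (1 <= N)%nat) (Hl : 0 < l) (Hdt : 0 < dt)
  (HL : L > INR (N + 1) * l) (Hv : v0min <= v0max)
  (* R_U is contained in the set of relative inputs *)
  (HRU : forall ut : nat -> R,
      (forall i, (i <= N)%nat -> Ia i <= ut i <= Ib i) ->
      exists u, inU N umin umax u /\ ut 0%nat = u 0%nat /\
        (forall i, (1 <= i <= N)%nat -> ut i = u 0%nat - u i))
  (* the set of relative disturbances is contained in R_W *)
  (HRW : forall wx wv, inW N wxmin wxmax wvmin wvmax wx wv ->
      (Jxa 0%nat <= wx 0%nat <= Jxb 0%nat /\ Jva 0%nat <= wv 0%nat <= Jvb 0%nat) /\
      (forall i, (1 <= i <= N)%nat ->
         Jxa i <= wx 0%nat - wx i <= Jxb i /\ Jva i <= wv 0%nat - wv i <= Jvb i))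
  (* Omega_i, i = 1..N *)
  (HOmS : forall i, (1 <= i <= N)%nat -> forall x v, Om i x v -> env_i N l L i x v)
  (HOmI : forall i, (1 <= i <= N)%nat -> forall x v, Om i x v ->
      exists uu, Ia i <= uu <= Ib i /\
        forall ox ov, Jxa i <= ox <= Jxb i -> Jva i <= ov <= Jvb i ->
          Om i (x + v * dt + uu * (dt ^ 2 / 2) + ox) (v + uu * dt + ov))
  (* Omega_0 *)
  (HOm0S : forall v, Om0 v -> env_0 v0min v0max v)
  (HOm0I : forall v, Om0 v ->
      exists uu, Ia 0%nat <= uu <= Ib 0%nat /\
        forall o, wvmin 0%nat <= o <= wvmax 0%nat -> Om0 (v + uu * dt + o)) :
  (forall y, env_set N l L v0min v0max y -> safe_set N l L v0min v0max y) /\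
  RCI N dt umin umax wxmin wxmax wvmin wvmax (Omega_set N Om Om0) /\
  (forall y, Omega_set N Om Om0 y -> env_set N l L v0min v0max y).
Proof.
  (* [Hl], [HL] and [Hv] only make the envelope sets nonempty; the proof does not need them. *)
  split; [| split].
  - intros y. exact (env_set_safe N l L v0min v0max y HN).
  - apply (Omega_set_RCI N dt umin umax wxmin wxmax wvmin wvmax Ia Ib Jxa Jxb Jva Jvb);
      [exact HRU | exact (fun wx wv HW => proj2 (HRW wx wv HW)) | exact HOmI | exact HOm0I].
  - exact (Omega_set_mono N Om Om0 (env_i N l L) (env_0 v0min v0max) HOmS HOm0S).
Qed.
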